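(* Let $n\ge2$. As real vector spaces, $J\mathcal{E}=\mathcal{N}_0\oplus J\mathcal{P}$.
   Context: Realize the unit sphere $S^{2n-1}$ near the point $e_0$ in Siegel form: coordinates $(w',w_n)\in\mathbb{C}^{n-1}\times\mathbb{C}$, the sphere is $2\operatorname{Re}w_n=|w'|^2$, $e_0=0$, and $(w',v)$ with $v=\operatorname{Im}w_n$ are local coordinates on it. $J\mathcal{E}$ is the space of $\infty$-jets at $e_0$ of real smooth functions, i.e. real formal power series in $(w',\bar w',v)$. $J\mathcal{P}\subset J\mathcal{E}$ is the subspace of jets of CR pluriharmonic functions, i.e. formal series of the form $\operatorname{Re}\sum_{\alpha\in\mathbb{N}^{n-1},\,l\ge0}A^l_\alpha\,{w'}^\alpha(|w'|^2+2iv)^l$ with $A^l_\alpha\in\mathbb{C}$. Write $f\in J\mathcal{E}$ as $f=\sum_{p,q\ge0}A_{p,q}(v)$ with $A_{p,q}(v)=\sum_{|\alpha|=p,|\beta|=q,l\ge0}A^l_{\alpha\bar\beta}{w'}^\alpha\bar w'^\beta v^l$. Let $\Delta'=\sum_{j=1}^{n-1}\partial_{w_j}\partial_{\bar w_j}$. $\mathcal{N}_0\subset J\mathcal{E}$ is the subspace defined by $A_{p,q}=0$ whenever $\min(p,q)=0$, and $\Delta'A_{1,1}=0$. *)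

From HB Require Import structures.
From mathcomp Require Import all_boot all_order all_algebra.
From mathcomp Require Import reals.
From mathcomp.real_closed Require Import complex.
From mathcomp Require Import mpoly.

Set Implicit Arguments.
Unset Strict Implicit.
Unset Printing Implicit Defensive.
Import GRing.Theory Num.Theory.
Local Open Scope ring_scope.

(* Throughout, k = n - 1 is the number of coordinates w' = (w_1,...,w_k).
   Formal power series in (w', \bar w', v) have 2k+1 formal variables,
   indexed by 'I_(2k+1):
     index j       (j < k)  <-> w_j
     index k + j   (j < k)  <-> \bar w_j
     index 2k               <-> v.
   A monomial w'^a \bar w'^b v^l is a multinomial m : 'X_{1..2k+1}. *)

Section JetDefs.
Variable R : realType.
Variable k : nat.

Local Notation N := (2 * k).+1.

Definition iw (j : 'I_k) : 'I_N := inord j.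
Definition ibw (j : 'I_k) : 'I_N := inord (k + j).
Definition iv : 'I_N := inord (2 * k).

Definition series := 'X_{1..N} -> R[i].

(* exchange of w_j and \bar w_j *)
Definition swap_idx (i : 'I_N) : 'I_N :=
  if (i < k)%N then inord (i + k) else if (i < 2 * k)%N then inord (i - k) else i.
Definition mswap (m : 'X_{1..N}) : 'X_{1..N} := [multinom m (swap_idx i) | i < N].

(* complex conjugate series: conj of c_m w^a \bar w^b v^l is
   conj(c_m) \bar w^a w^b v^l (v is real) *)
Definition conj_series (c : series) : series := fun m => (c (mswap m))^*.

(* J E : jets of real smooth functions = real formal series *)
Definition JE (c : series) : Prop := forall m, conj_series c m = c m.

Definition degw (m : 'X_{1..N}) : nat := (\sum_(j < k) m (iw j))%N.
Definition degbw (m : 'X_{1..N}) : nat := (\sum_(j < k) m (ibw j))%N.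

Definition Apq (p q : nat) (c : series) : series :=
  fun m => if (degw m == p) && (degbw m == q) then c m else 0.

Definition fderiv (i : 'I_N) (c : series) : series :=
  fun m => (m i).+1%:R * c (m + U_(i))%MM.

Definition Laplw (c : series) : series :=
  fun m => \sum_(j < k) fderiv (iw j) (fderiv (ibw j) c) m.

Definition N0 (c : series) : Prop :=
  JE c /\
  (forall p q, minn p q = 0%N -> forall m, Apq p q c m = 0) /\
  (forall m, Laplw (Apq 1 1 c) m = 0).

Definition Pterm (alpha : 'X_{1..k}) (l : nat) : {mpoly R[i][N]} :=
  (\prod_(j < k) 'X_(iw j) ^+ alpha j) *
  (\sum_(j < k) 'X_(iw j) * 'X_(ibw j) + (2 * 'i)%:MP * 'X_iv) ^+ l.

Definition formal_sum (I : eqType) (F : I -> series) (g : series) : Prop :=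
  forall m, exists s : seq I,
    [/\ uniq s, (forall x, x \notin s -> F x m = 0) & g m = \sum_(x <- s) F x m].

(* J P : jets of CR pluriharmonic functions,
   Re sum_{alpha,l} A^l_alpha w'^alpha (|w'|^2 + 2 i v)^l *)
Definition JP (c : series) : Prop :=
  exists (A : 'X_{1..k} -> nat -> R[i]) (g : series),
    formal_sum (fun al : 'X_{1..k} * nat => fun m => A al.1 al.2 * (Pterm al.1 al.2)@_m) g /\
    (forall m, c m = (g m + conj_series g m) / 2%:R).

End JetDefs.

From HB Require Import structures.
From mathcomp Require Import all_boot all_order all_algebra.
From mathcomp Require Import reals.
From mathcomp.real_closed Require Import complex.
From mathcomp Require Import mpoly.
From mathcomp Require Import zify ring.
Import GRing.Theory Num.Theory.
Local Open Scope ring_scope.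

Set Implicit Arguments.
Unset Strict Implicit.
Unset Printing Implicit Defensive.

(* The generators of JP are the real parts of the CR monomials w'^a (|w'|^2 + 2iv)^l.
   Their coefficients on three kinds of monomials are easy to read off: on w'^a v^l
   (no \bar w') only the generator of index (a, l) contributes, with coefficient (2i)^l;
   on \bar w'^a v^l (no w', a <> 0) none does; and on w_j \bar w_j v^t only (0, t+1) does,
   with coefficient (t+1) (2i)^t.
   An element of N_0 vanishes on the first two kinds, which forces A^l_a = 0 for a <> 0
   and Re(A^l_0 (2i)^l) = 0; the equation Delta' A_{1,1} = 0 says that its coefficients
   on the w_j \bar w_j v^t sum to zero over j, which then forces A^{t+1}_0 = 0.  So N_0
   meets JP only in 0.  Conversely, for a real jet f the same formulas let us choose the
   A^l_a so that the real part h of the series agrees with f on the monomials w'^a v^l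
   (hence, by reality, on \bar w'^a v^l) and takes on each w_j \bar w_j v^t the average
   over j of the coefficients of f there; then f - h lies in N_0. *)

Section Complements.
Variable n : nat.

Lemma lem0m (m : 'X_{1..n}) : (0 <= m)%MM.
Proof. by apply/mnm_lepP => i; rewrite mnm0E. Qed.

Lemma exists_neq_mnm (a b : 'X_{1..n}) : a != b -> exists j, a j != b j.
Proof.
move=> neq_ab; apply/existsP; rewrite -negb_forall; apply: contra neq_ab => /forallP eq_ab.
by apply/eqP/mnmP => j; apply/eqP.
Qed.

Lemma mcoeffMXE (R : nzRingType) (p : {mpoly R[n]}) u m :
  (p * 'X_[u])@_m = if (u <= m)%MM then p@_(m - u) else 0.
Proof.
case: ifP => [le_um|nle_um]; first by rewrite -{1}(submK le_um) addmC mcoeffMX.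
apply/eqP; rewrite mcoeff_eq0 (perm_mem (msuppMX p u)).
by apply/negP => /mapP [m' _ eq_m]; move: nle_um; rewrite eq_m lem_addr.
Qed.

Lemma lem_U i (m : 'X_{1..n}) : (U_(i) <= m)%MM = (0 < m i)%N.
Proof.
apply/mnm_lepP/idP => [le_Um|m_i j]; first by have := le_Um i; rewrite mnm1E eqxx.
by rewrite mnm1E; case: eqP => [<-|].
Qed.

Lemma lem_UU i j (m : 'X_{1..n}) : i != j ->
  (U_(i) + U_(j) <= m)%MM = (0 < m i)%N && (0 < m j)%N.
Proof.
move=> nij; apply/mnm_lepP/andP => [le_UUm|[m_i m_j] t].
  have := le_UUm i; have := le_UUm j; rewrite !mnmDE !mnm1E !eqxx (negbTE nij).
  by rewrite eq_sym (negbTE nij).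
rewrite mnmDE !mnm1E; case: (eqVneq i t) => [<-|_]; first by rewrite eq_sym (negbTE nij).
by case: (eqVneq j t) => [<-|].
Qed.

Lemma eqm_subl (u v m : 'X_{1..n}) : (u <= m)%MM -> (m - u == v)%MM = (m == v + u)%MM.
Proof. by move=> le_um; apply/eqP/eqP => [<-|->]; rewrite ?submK ?addmK. Qed.

Lemma big_seq_single (V : nmodType) (I : eqType) (s : seq I) (F : I -> V) x0 :
  uniq s -> (forall x, x \notin s -> F x = 0) -> (forall x, x != x0 -> F x = 0) ->
  \sum_(x <- s) F x = F x0.
Proof.
move=> uniq_s F_out F_x0; case: (boolP (x0 \in s)) => [x0s|x0Ns].
  by rewrite (bigD1_seq x0) //= big1 ?addr0 // => x /F_x0.
rewrite (F_out _ x0Ns) big1_seq // => x /andP [_ xs]; apply: F_x0.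
by apply: contraNneq x0Ns => <-.
Qed.
End Complements.

Section JetDecomposition.
Variable R : realType.
Variable k : nat.
Local Notation N := (2 * k).+1.
Local Notation C := R[i].

Lemma val_iw (j : 'I_k) : (iw j : nat) = j.
Proof. rewrite /iw inordK //; apply: (leq_trans (ltn_ord j)); lia. Qed.
Lemma val_ibw (j : 'I_k) : (ibw j : nat) = (k + j)%N.
Proof. rewrite /ibw inordK //; have := ltn_ord j; lia. Qed.
Lemma val_iv : (iv k : nat) = (2 * k)%N.
Proof. by rewrite /iv inordK. Qed.

Lemma eq_iw (a b : 'I_k) : (iw a == iw b) = (a == b).
Proof. by rewrite -val_eqE /= !val_iw. Qed.
Lemma eq_ibw (a b : 'I_k) : (ibw a == ibw b) = (a == b).
Proof. rewrite -val_eqE /= !val_ibw -val_eqE /=; apply/eqP/eqP; lia. Qed.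
Lemma eq_iw_ibw (a b : 'I_k) : (iw a == ibw b) = false.
Proof. apply/negbTE; rewrite -val_eqE /= val_iw val_ibw; have := ltn_ord a; lia. Qed.
Lemma eq_ibw_iw (a b : 'I_k) : (ibw a == iw b) = false.
Proof. by rewrite eq_sym eq_iw_ibw. Qed.
Lemma eq_iw_iv (a : 'I_k) : (iw a == iv k) = false.
Proof. apply/negbTE; rewrite -val_eqE /= val_iw val_iv; have := ltn_ord a; lia. Qed.
Lemma eq_iv_iw (a : 'I_k) : (iv k == iw a) = false.
Proof. by rewrite eq_sym eq_iw_iv. Qed.
Lemma eq_ibw_iv (a : 'I_k) : (ibw a == iv k) = false.
Proof. apply/negbTE; rewrite -val_eqE /= val_ibw val_iv; have := ltn_ord a; lia. Qed.
Lemma eq_iv_ibw (a : 'I_k) : (iv k == ibw a) = false.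
Proof. by rewrite eq_sym eq_ibw_iv. Qed.

Definition eq_jet_idx := (eq_iw, eq_ibw, eq_iw_ibw, eq_ibw_iw, eq_iw_iv, eq_iv_iw,
  eq_ibw_iv, eq_iv_ibw, eqxx).

Lemma jet_idx_cases (P : 'I_N -> Prop) :
  (forall j, P (iw j)) -> (forall j, P (ibw j)) -> P (iv k) -> forall i, P i.
Proof.
move=> Pw Pbw Pv i; case: (ltnP i k) => ik.
  have -> : i = iw (Ordinal ik) by apply: ord_inj; rewrite val_iw.
  exact: Pw.
case: (ltnP i (2 * k)) => i2k.
  have ik' : (i - k < k)%N by lia.
  have -> : i = ibw (Ordinal ik') by apply: ord_inj; rewrite val_ibw /=; lia.
  exact: Pbw.
have -> : i = iv k by apply: ord_inj; rewrite val_iv; have := ltn_ord i; lia.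
exact: Pv.
Qed.

Lemma swap_idx_iw (j : 'I_k) : swap_idx (iw j) = ibw j.
Proof.
rewrite /swap_idx val_iw ltn_ord; apply: ord_inj.
rewrite val_ibw inordK; first exact: addnC.
by have := ltn_ord j; lia.
Qed.
Lemma swap_idx_ibw (j : 'I_k) : swap_idx (ibw j) = iw j.
Proof.
have lt_jk := ltn_ord j; rewrite /swap_idx val_ibw.
have -> : (k + j < k)%N = false by lia.
have -> : (k + j < 2 * k)%N = true by lia.
by apply: ord_inj; rewrite val_iw inordK; lia.
Qed.
Lemma swap_idx_iv : swap_idx (iv k) = iv k.
Proof.
rewrite /swap_idx val_iv.
have -> : (2 * k < k)%N = false by lia.
by rewrite ltnn.
Qed.

Lemma mswapE (m : 'X_{1..N}) i : mswap m i = m (swap_idx i).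
Proof. by rewrite /mswap mnmE. Qed.

Lemma mswapK : involutive (@mswap k).
Proof.
move=> m; apply/mnmP => i; rewrite !mswapE; move: i.
by apply: jet_idx_cases => [j|j|]; rewrite ?(swap_idx_iw, swap_idx_ibw, swap_idx_iv).
Qed.

Lemma mswap_id (m : 'X_{1..N}) : (forall j, m (iw j) = m (ibw j)) -> mswap m = m.
Proof.
move=> eq_m; apply/mnmP => i; rewrite !mswapE; move: i.
by apply: jet_idx_cases => [j|j|]; rewrite ?(swap_idx_iw, swap_idx_ibw, swap_idx_iv).
Qed.

Lemma degw_eq0 (m : 'X_{1..N}) : degw m = 0%N <-> forall j, m (iw j) = 0%N.
Proof.
split=> [|m0]; last by rewrite /degw big1.
by move/eqP; rewrite sum_nat_eq0 => /forallP m0 j; apply/eqP/m0.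
Qed.
Lemma degbw_eq0 (m : 'X_{1..N}) : degbw m = 0%N <-> forall j, m (ibw j) = 0%N.
Proof.
split=> [|m0]; last by rewrite /degbw big1.
by move/eqP; rewrite sum_nat_eq0 => /forallP m0 j; apply/eqP/m0.
Qed.

Lemma degwD (m1 m2 : 'X_{1..N}) : degw (m1 + m2)%MM = (degw m1 + degw m2)%N.
Proof. by rewrite /degw -big_split; apply: eq_bigr => j _; rewrite mnmDE. Qed.
Lemma degbwD (m1 m2 : 'X_{1..N}) : degbw (m1 + m2)%MM = (degbw m1 + degbw m2)%N.
Proof. by rewrite /degbw -big_split; apply: eq_bigr => j _; rewrite mnmDE. Qed.
Lemma degw_Uw (j : 'I_k) : degw U_(iw j) = 1%N.
Proof.
rewrite /degw (bigD1 j) //= mnm1E eqxx big1 // => j' /negbTE nj.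
by rewrite mnm1E eq_iw eq_sym nj.
Qed.
Lemma degbw_Ubw (j : 'I_k) : degbw U_(ibw j) = 1%N.
Proof.
rewrite /degbw (bigD1 j) //= mnm1E eqxx big1 // => j' /negbTE nj.
by rewrite mnm1E eq_ibw eq_sym nj.
Qed.
Lemma degw_Ubw (j : 'I_k) : degw U_(ibw j) = 0%N.
Proof. by rewrite /degw big1 // => j' _; rewrite mnm1E eq_jet_idx. Qed.
Lemma degbw_Uw (j : 'I_k) : degbw U_(iw j) = 0%N.
Proof. by rewrite /degbw big1 // => j' _; rewrite mnm1E eq_jet_idx. Qed.

(** * The CR monomials w'^a (|w'|^2 + 2iv)^l *)

Definition twoi : C := 2 * 'i.
Arguments twoi : simpl never.

Lemma twoi_neq0 : twoi != 0.
Proof. by rewrite mulf_neq0 ?neq0Ci // pnatr_eq0. Qed.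
Lemma conj_twoi : twoi^* = - twoi.
Proof. by rewrite rmorphM /= conjC_nat conjCi mulrN. Qed.
Lemma two_neq0 : (2%:R : C) != 0.
Proof. by rewrite pnatr_eq0. Qed.

(* |w'|^2 + 2iv, i.e. 2 w_n restricted to the sphere *)
Definition wn2 : {mpoly C[N]} :=
  \sum_(j < k) 'X_(iw j) * 'X_(ibw j) + twoi%:MP * 'X_(iv k).

Definition mw (a : 'X_{1..k}) : 'X_{1..N} := (\sum_(j < k) U_(iw j) *+ a j)%MM.
Definition mv t : 'X_{1..N} := (U_(iv k) *+ t)%MM.
Definition mwv a l : 'X_{1..N} := (mw a + mv l)%MM.
Definition mpair (j : 'I_k) t : 'X_{1..N} := (U_(iw j) + U_(ibw j) + mv t)%MM.
Definition wpart (m : 'X_{1..N}) : 'X_{1..k} := [multinom m (iw j) | j < k].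

Lemma mwE a i : mw a i = (\sum_(j < k) ((iw j == i) * a j))%N.
Proof. by rewrite /mw mnm_sumE; apply: eq_bigr => j _; rewrite mulmnE mnm1E. Qed.
Lemma mw_iw a j : mw a (iw j) = a j.
Proof.
rewrite mwE (bigD1 j) //= eqxx mul1n big1 ?addn0 // => j' /negbTE nj.
by rewrite eq_iw nj.
Qed.
Lemma mw_ibw a j : mw a (ibw j) = 0%N.
Proof. by rewrite mwE big1 // => j' _; rewrite eq_iw_ibw. Qed.
Lemma mw_iv a : mw a (iv k) = 0%N.
Proof. by rewrite mwE big1 // => j' _; rewrite eq_iw_iv. Qed.
Lemma mw0 : mw 0%MM = 0%MM.
Proof. by apply/mnmP => i; rewrite mwE mnm0E big1 // => j _; rewrite mnm0E muln0. Qed.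

Lemma mvE t i : mv t i = ((iv k == i) * t)%N.
Proof. by rewrite /mv mulmnE mnm1E mulnC. Qed.
Lemma eq_mv a b : (mv a == mv b) = (a == b).
Proof.
apply/eqP/eqP => [eq_ab|-> //].
by have := congr1 (fun m : 'X_{1..N} => m (iv k)) eq_ab; rewrite /= !mvE eqxx !mul1n.
Qed.
Lemma mnm_vE (m : 'X_{1..N}) :
  (forall j, m (iw j) = 0%N) -> (forall j, m (ibw j) = 0%N) -> m = mv (m (iv k)).
Proof.
move=> m_w m_bw; apply/mnmP; apply: jet_idx_cases => [j|j|].
- by rewrite mvE eq_jet_idx m_w.
- by rewrite mvE eq_jet_idx m_bw.
- by rewrite mvE eqxx mul1n.
Qed.
Lemma mswap_mv t : mswap (mv t) = mv t.
Proof. by apply: mswap_id => j; rewrite !mvE !eq_jet_idx. Qed.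
Lemma wpart_mv t : wpart (mv t) = 0%MM.
Proof. by apply/mnmP => j; rewrite mnmE mvE eq_jet_idx mnm0E. Qed.

Lemma mwv_iw a l j : mwv a l (iw j) = a j.
Proof. by rewrite mnmDE mvE mw_iw eq_jet_idx addn0. Qed.
Lemma mwv_ibw a l j : mwv a l (ibw j) = 0%N.
Proof. by rewrite mnmDE mvE mw_ibw eq_jet_idx. Qed.
Lemma mwv_iv a l : mwv a l (iv k) = l.
Proof. by rewrite mnmDE mvE mw_iv eqxx mul1n. Qed.
Lemma wpart_mwv a l : wpart (mwv a l) = a.
Proof. by apply/mnmP => j; rewrite mnmE mwv_iw. Qed.
Lemma mnm_wvE (m : 'X_{1..N}) : (forall j, m (ibw j) = 0%N) -> m = mwv (wpart m) (m (iv k)).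
Proof.
move=> m_bw; apply/mnmP; apply: jet_idx_cases => [j|j|].
- by rewrite mwv_iw mnmE.
- by rewrite mwv_ibw m_bw.
- by rewrite mwv_iv.
Qed.

Lemma mpair_iw j t j' : mpair j t (iw j') = (j == j' : nat).
Proof. by rewrite !mnmDE mvE !mnm1E !eq_jet_idx /= ?mul0n ?mul1n ?addn0 ?add0n. Qed.
Lemma mpair_ibw j t j' : mpair j t (ibw j') = (j == j' : nat).
Proof. by rewrite !mnmDE mvE !mnm1E !eq_jet_idx /= ?mul0n ?mul1n ?addn0 ?add0n. Qed.
Lemma mpair_iv j t : mpair j t (iv k) = t.
Proof. by rewrite !mnmDE mvE !mnm1E !eq_jet_idx /= ?mul0n ?mul1n ?addn0 ?add0n. Qed.
Lemma mswap_mpair j t : mswap (mpair j t) = mpair j t.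
Proof. by apply: mswap_id => j'; rewrite mpair_iw mpair_ibw. Qed.
Lemma degw_mpair j t : degw (mpair j t) = 1%N.
Proof.
rewrite /degw (bigD1 j) //= mpair_iw eqxx big1 // => j' /negbTE nj.
by rewrite mpair_iw eq_sym nj.
Qed.
Lemma degbw_mpair j t : degbw (mpair j t) = 1%N.
Proof.
rewrite /degbw (bigD1 j) //= mpair_ibw eqxx big1 // => j' /negbTE nj.
by rewrite mpair_ibw eq_sym nj.
Qed.

Lemma mcoeff_Pterm a l m : (Pterm R a l)@_m =
  if (mw a <= m)%MM then (wn2 ^+ l)@_(m - mw a) else 0.
Proof. by rewrite /Pterm mulrC /mw mprodXnE mcoeffMXE. Qed.

Lemma mcoeff_wn2XS l m : (wn2 ^+ l.+1)@_m =
  \sum_(j < k) (if (U_(iw j) + U_(ibw j) <= m)%MM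
                then (wn2 ^+ l)@_(m - (U_(iw j) + U_(ibw j))) else 0)
  + twoi * (if (U_(iv k) <= m)%MM then (wn2 ^+ l)@_(m - U_(iv k)) else 0).
Proof.
rewrite exprSr {2}/wn2 mulrDr mcoeffD mulr_sumr raddf_sum /=; congr (_ + _).
  by apply: eq_bigr => j _; rewrite -mpolyXD mcoeffMXE.
by rewrite mulrCA mcoeffCM mcoeffMXE.
Qed.

(* Without any factor w_j \bar w_j only the term (2iv)^l of the expansion survives. *)
Lemma mcoeff_wn2X_nopair l (m : 'X_{1..N}) :
  (forall j, (m (iw j) == 0%N) || (m (ibw j) == 0%N)) ->
  (wn2 ^+ l)@_m = if m == mv l then twoi ^+ l else 0.
Proof.
elim: l m => [|l IHl] m nopair_m; first by rewrite expr0 mcoeff1 /mv mulm0n; case: eqP.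
rewrite mcoeff_wn2XS big1 ?add0r; last first.
  move=> j _; rewrite lem_UU ?eq_iw_ibw //.
  by case/orP: (nopair_m j) => /eqP ->; rewrite ?andbF.
case: ifP => [le_Um|]; last first.
  by rewrite mulr0 lem_U; case: eqP => // -> ; rewrite mvE eqxx.
rewrite IHl => [|j]; last by rewrite !mnmBE !mnm1E !eq_jet_idx !subn0.
rewrite eqm_subl // /mv mulmSr.
by case: eqP => _; rewrite ?mulr0 // exprS.
Qed.

(* One of the l factors supplies w_j \bar w_j and the other t = l - 1 supply 2iv. *)
Lemma mcoeff_wn2X_pair l j0 (m : 'X_{1..N}) : m (iw j0) = 1%N -> m (ibw j0) = 1%N ->
  (forall j, j != j0 -> m (iw j) = 0%N /\ m (ibw j) = 0%N) ->
  (wn2 ^+ l)@_m = if l == (m (iv k)).+1 then l%:R * twoi ^+ (m (iv k)) else 0.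
Proof.
elim: l m => [|l IHl] m m_w0 m_bw0 m_else.
  by rewrite expr0 mcoeff1; case: eqP => // m0; move: m_w0; rewrite m0 mnm0E.
rewrite mcoeff_wn2XS (bigD1 j0) //= big1 ?addr0; last first.
  by move=> j /m_else [m_w _]; rewrite lem_UU ?eq_iw_ibw // m_w.
rewrite lem_UU ?eq_iw_ibw // m_w0 m_bw0 /=.
set m' := (m - _)%MM.
have m'_w j : m' (iw j) = 0%N.
  rewrite mnmBE mnmDE !mnm1E !eq_jet_idx; case: (eqVneq j0 j) => [<-|nj].
    by rewrite m_w0.
  by case: (m_else j); [rewrite eq_sym | move=> ->].
have m'_bw j : m' (ibw j) = 0%N.
  rewrite mnmBE mnmDE !mnm1E !eq_jet_idx; case: (eqVneq j0 j) => [<-|nj].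
    by rewrite m_bw0.
  by case: (m_else j); [rewrite eq_sym | move=> _ ->].
have m'_v : m' (iv k) = m (iv k) by rewrite mnmBE mnmDE !mnm1E !eq_jet_idx subn0.
rewrite mcoeff_wn2X_nopair => [|j]; last by rewrite m'_w.
rewrite {1}(mnm_vE m'_w m'_bw) eq_mv m'_v lem_U.
case: (posnP (m (iv k))) => [->|t_gt0].
  rewrite mulr0 addr0 expr0 mulr1.
  by case: (eqVneq 0%N l) => [<-|/negbTE nl] //; rewrite eqSS eq_sym nl.
rewrite IHl; first last.
- by move=> j /m_else; rewrite !mnmBE !mnm1E !eq_jet_idx !subn0.
- by rewrite mnmBE mnm1E eq_jet_idx subn0.
- by rewrite mnmBE mnm1E eq_jet_idx subn0.
rewrite mnmBE mnm1E eqxx subn1 prednK // eqSS eq_sym.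
case: eqP => [->|_]; last by rewrite mulr0 addr0.
rewrite mulrCA -exprS prednK // -[X in X + _]mul1r -mulrDl.
by rewrite -natr1 addrC.
Qed.

(* Every monomial of wn2 has degree at least 1. *)
Lemma mdeg_mcoeff_wn2X l (m : 'X_{1..N}) : (wn2 ^+ l)@_m != 0 -> (l <= mdeg m)%N.
Proof.
elim: l m => [|l IHl] m //; apply: contraR; rewrite -ltnNge => lt_m_l.
have mdeg_subm (u : 'X_{1..N}) : (u <= m)%MM -> mdeg m = (mdeg (m - u) + mdeg u)%N.
  by move=> le_um; rewrite -mdegD submK.
rewrite mcoeff_wn2XS big1 ?add0r => [|j _].
  case: ifP => [/mdeg_subm mdeg_m|]; last by rewrite mulr0.
  have [->|/IHl] := eqVneq ((wn2 ^+ l)@_(m - U_(iv k))) 0; first by rewrite mulr0.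
  by move: lt_m_l; rewrite mdeg_m mdeg1; lia.
case: ifP => [/mdeg_subm mdeg_m|//].
have [->|/IHl] := eqVneq ((wn2 ^+ l)@_(m - (U_(iw j) + U_(ibw j)))) 0 => //.
by move: lt_m_l; rewrite mdeg_m mdegD !mdeg1; lia.
Qed.

Lemma mcoeff_Pterm_holo (a : 'X_{1..k}) l (m : 'X_{1..N}) :
  (forall j, m (ibw j) = 0%N) ->
  (Pterm R a l)@_m = if (a == wpart m) && (l == m (iv k)) then twoi ^+ l else 0.
Proof.
move=> m_bw; rewrite mcoeff_Pterm.
have nopair (u : 'X_{1..N}) j : ((m - u)%MM (iw j) == 0%N) || ((m - u)%MM (ibw j) == 0%N).
  by rewrite !mnmBE m_bw orbT.
case: (eqVneq a (wpart m)) => [->|neq_a] /=.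
  have -> : (mw (wpart m) <= m)%MM.
    by apply/mnm_lepP; apply: jet_idx_cases => [j|j|]; rewrite ?mw_iw ?mnmE ?mw_ibw ?mw_iv.
  rewrite mcoeff_wn2X_nopair //.
  set m' := (m - _)%MM.
  have m'_w j : m' (iw j) = 0%N by rewrite mnmBE mw_iw mnmE subnn.
  have m'_bw j : m' (ibw j) = 0%N by rewrite mnmBE mw_ibw m_bw.
  by rewrite (mnm_vE m'_w m'_bw) eq_mv mnmBE mw_iv subn0 eq_sym.
case: ifP => [/mnm_lepP le_am|//].
rewrite mcoeff_wn2X_nopair //; case: eqP => // eq_m.
have [j neq_j] := exists_neq_mnm neq_a.
have := congr1 (fun m0 : 'X_{1..N} => m0 (iw j)) eq_m => /=.
rewrite mnmBE mw_iw mvE eq_jet_idx mul0n.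
by have := le_am (iw j); move: neq_j; rewrite mw_iw mnmE; lia.
Qed.

Lemma mcoeff_Pterm_antiholo (a : 'X_{1..k}) l (m : 'X_{1..N}) :
  (forall j, m (iw j) = 0%N) ->
  (Pterm R a l)@_m = if (a == 0%MM) && (m == mv l) then twoi ^+ l else 0.
Proof.
move=> m_w; rewrite mcoeff_Pterm.
case: (eqVneq a 0%MM) => [->|neq_a] /=.
  by rewrite mw0 lem0m subm0 mcoeff_wn2X_nopair // => j; rewrite m_w.
case: ifP => [/mnm_lepP le_am|//]; exfalso.
have [j neq_j] := exists_neq_mnm neq_a.
by have := le_am (iw j); move: neq_j; rewrite mw_iw m_w mnm0E; lia.
Qed.

Lemma mcoeff_Pterm_pair (a : 'X_{1..k}) l j t :
  (Pterm R a l)@_(mpair j t) =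
    if (a == 0%MM) && (l == t.+1) then l%:R * twoi ^+ t else 0.
Proof.
have m_w0 : mpair j t (iw j) = 1%N by rewrite mpair_iw eqxx.
have m_bw0 : mpair j t (ibw j) = 1%N by rewrite mpair_ibw eqxx.
have m_else j' : j' != j -> mpair j t (iw j') = 0%N /\ mpair j t (ibw j') = 0%N.
  by move=> /negbTE nj; rewrite mpair_iw mpair_ibw eq_sym nj.
rewrite mcoeff_Pterm; case: (eqVneq a 0%MM) => [->|neq_a] /=.
  by rewrite mw0 lem0m subm0 (mcoeff_wn2X_pair _ m_w0 m_bw0 m_else) mpair_iv.
case: ifP => [/mnm_lepP le_am|//].
have a_else j' : j' != j -> a j' = 0%N.
  by move=> /m_else[m_w _]; have := le_am (iw j'); rewrite mw_iw m_w; lia.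
have a_j : a j = 1%N.
  have [j' neq_j'] := exists_neq_mnm neq_a.
  have eq_j' : j' = j by apply/eqP; apply: contraR neq_j' => /a_else ->; rewrite mnm0E.
  by have := le_am (iw j); move: neq_j'; rewrite eq_j' mw_iw m_w0 mnm0E; lia.
rewrite mcoeff_wn2X_nopair => [|j']; last first.
  rewrite !mnmBE mw_iw mw_ibw; case: (eqVneq j' j) => [->|/m_else[-> _]] //.
  by rewrite m_w0 a_j.
case: eqP => // eq_m.
have := congr1 (fun m0 : 'X_{1..N} => m0 (ibw j)) eq_m => /=.
by rewrite mnmBE mw_ibw mvE eq_jet_idx m_bw0.
Qed.

Definition JPterm (A : 'X_{1..k} -> nat -> C) (al : 'X_{1..k} * nat) (m : 'X_{1..N}) : C :=
  A al.1 al.2 * (Pterm R al.1 al.2)@_m.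

Lemma mdeg_mcoeff_Pterm a l (m : 'X_{1..N}) : (Pterm R a l)@_m != 0 ->
  (forall j, a j <= mdeg m)%N /\ (l <= mdeg m)%N.
Proof.
rewrite mcoeff_Pterm; case: ifP => [/mnm_lepP le_am|]; last by rewrite eqxx.
move=> /mdeg_mcoeff_wn2X le_l; split; first last.
  by apply: leq_trans le_l (mdegB _ _).
move=> j; rewrite -(mw_iw a j); apply: leq_trans (le_am (iw j)) _.
by rewrite mdegE (bigD1 (iw j)) //= leq_addr.
Qed.

(* Contains every index whose generator has a nonzero coefficient on m. *)
Definition JPindex (m : 'X_{1..N}) : seq ('X_{1..k} * nat) :=
  undup [seq ([multinom (nat_of_ord (f j)) | j < k], l) |
           f : {ffun 'I_k -> 'I_(mdeg m).+1} <- enum {ffun 'I_k -> 'I_(mdeg m).+1},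
           l <- iota 0 (mdeg m).+1].

Lemma JPterm_eq0 A m x : x \notin JPindex m -> JPterm A x m = 0.
Proof.
case: x => a l; apply: contraNeq => JPterm_neq0.
have /mdeg_mcoeff_Pterm[le_a le_l] : (Pterm R a l)@_m != 0.
  by apply: contraNneq JPterm_neq0 => coef0; rewrite /JPterm /= coef0 mulr0.
rewrite mem_undup; apply/allpairsP.
exists ([ffun j => inord (a j)] : {ffun 'I_k -> 'I_(mdeg m).+1}, l).
split; [by rewrite mem_enum | by rewrite mem_iota add0n ltnS |].
by congr (_, _); apply/mnmP => j; rewrite mnmE /= ffunE inordK ?ltnS.
Qed.

Definition JPsum A : series R k := fun m => \sum_(x <- JPindex m) JPterm A x m.

Lemma formal_sum_JPsum A : formal_sum (JPterm A) (JPsum A).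
Proof. by move=> m; exists (JPindex m); split; [exact: undup_uniq | exact: JPterm_eq0 |]. Qed.

Section JPSeries.
Variables (A : 'X_{1..k} -> nat -> C) (g : series R k).
Hypothesis JPg : formal_sum (JPterm A) g.

Lemma JPseries_single m x0 : (forall x, x != x0 -> JPterm A x m = 0) -> g m = JPterm A x0 m.
Proof. by have [s [uniq_s s_out ->]] := JPg m; exact: big_seq_single. Qed.

Lemma JPseries_holo (m : 'X_{1..N}) : (forall j, m (ibw j) = 0%N) ->
  g m = A (wpart m) (m (iv k)) * twoi ^+ (m (iv k)).
Proof.
move=> m_bw; rewrite (@JPseries_single _ (wpart m, m (iv k))) => [|[a l] neq_al].
  by rewrite /JPterm /= mcoeff_Pterm_holo // !eqxx.
rewrite /JPterm /= mcoeff_Pterm_holo //.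
by move: neq_al; rewrite xpair_eqE => /negbTE ->; rewrite mulr0.
Qed.

Lemma JPseries_antiholo (m : 'X_{1..N}) : (forall j, m (iw j) = 0%N) ->
  (exists j, m (ibw j) != 0%N) -> g m = 0.
Proof.
move=> m_w [j m_bw]; have [s [_ _ ->]] := JPg m.
rewrite big1 // => -[a l] _; rewrite /JPterm /= mcoeff_Pterm_antiholo //.
case: (m =P mv l) => [eq_m|_]; last by rewrite andbF mulr0.
by move: m_bw; rewrite eq_m mvE eq_jet_idx.
Qed.

Lemma JPseries_mswap_mwv a l : a != 0%MM -> g (mswap (mwv a l)) = 0.
Proof.
move=> neq_a; apply: JPseries_antiholo => [j|].
  by rewrite mswapE swap_idx_iw mwv_ibw.
have [j neq_j] := exists_neq_mnm neq_a; exists j.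
by rewrite mswapE swap_idx_ibw mwv_iw; move: neq_j; rewrite mnm0E.
Qed.

Lemma JPseries_pair j t : g (mpair j t) = A 0%MM t.+1 * (t.+1%:R * twoi ^+ t).
Proof.
rewrite (@JPseries_single _ (0%MM, t.+1)) => [|[a l] neq_al].
  by rewrite /JPterm /= mcoeff_Pterm_pair !eqxx.
rewrite /JPterm /= mcoeff_Pterm_pair.
by move: neq_al; rewrite xpair_eqE => /negbTE ->; rewrite mulr0.
Qed.

Lemma JPseries_const (m : 'X_{1..N}) :
  (forall x, x != (0%MM, 0%N) -> A x.1 x.2 = 0) -> g m = A 0%MM 0%N * (m == 0%MM)%:R.
Proof.
move=> A0; rewrite (@JPseries_single _ (0%MM, 0%N)) => [|x /A0]; last first.
  by rewrite /JPterm => ->; rewrite mul0r.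
by rewrite /JPterm /= mcoeff_Pterm mw0 lem0m subm0 expr0 mcoeff1.
Qed.

End JPSeries.

Lemma LaplwE (c : series R k) m : Laplw c m =
  \sum_(j < k) ((m (iw j)).+1%:R * ((m + U_(iw j))%MM (ibw j)).+1%:R *
                c (m + U_(iw j) + U_(ibw j))%MM).
Proof. by apply: eq_bigr => j _; rewrite /fderiv mulrA. Qed.

Lemma Laplw_Apq11_mv (c : series R k) t :
  Laplw (Apq 1 1 c) (mv t) = \sum_(j < k) c (mpair j t).
Proof.
rewrite LaplwE; apply: eq_bigr => j _.
rewrite mnmDE !mvE !mnm1E !eq_jet_idx /= !mul1r.
have -> : (mv t + U_(iw j) + U_(ibw j))%MM = mpair j t by apply/mnmP => i; rewrite !mnmDE; lia.
by rewrite /Apq degw_mpair degbw_mpair.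
Qed.

Lemma Laplw_Apq11_eq0 (c : series R k) m :
  (0 < degw m)%N || (0 < degbw m)%N -> Laplw (Apq 1 1 c) m = 0.
Proof.
move=> deg_m; rewrite LaplwE big1 // => j _.
rewrite /Apq !degwD !degbwD degw_Uw degw_Ubw degbw_Uw degbw_Ubw.
by case: ifP => [/andP[/eqP ? /eqP ?]|_]; [move: deg_m; lia | rewrite mulr0].
Qed.

Definition re_series (g : series R k) : series R k :=
  fun m => (g m + conj_series g m) / 2%:R.

Lemma conj_re_series_mswap (g : series R k) m : (re_series g (mswap m))^* = re_series g m.
Proof.
rewrite /re_series /conj_series rmorphM /= fmorphV /= conjC_nat rmorphD /= conjCK.
by rewrite mswapK addrC.
Qed.

Lemma mswap0 : mswap (0%MM : 'X_{1..N}) = 0%MM.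
Proof. by apply: mswap_id => j; rewrite !mnm0E. Qed.

Lemma N0_holo_eq0 (f : series R k) (m : 'X_{1..N}) :
  N0 f -> (forall j, m (ibw j) = 0%N) -> f m = 0.
Proof.
move=> [_ [Apq0 _]] m_bw; have := Apq0 (degw m) 0%N (minn0 _) m.
by rewrite /Apq eqxx (proj2 (degbw_eq0 m) m_bw) eqxx.
Qed.

(** * N_0 meets JP only in 0 *)

Section PositiveDimension.
Hypothesis k_gt0 : (0 < k)%N.

Lemma natr_k_neq0 : (k%:R : C) != 0.
Proof. by rewrite pnatr_eq0 -lt0n. Qed.

Section Uniqueness.
Variables (f : series R k) (A : 'X_{1..k} -> nat -> C) (g : series R k).
Hypotheses (N0f : N0 f) (JPg : formal_sum (JPterm A) g) (f_re : forall m, f m = re_series g m).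

Lemma N0_JP_coef_holo a l : a != 0%MM -> A a l = 0.
Proof.
move=> neq_a; have := N0_holo_eq0 N0f (mwv_ibw a l).
rewrite f_re /re_series /conj_series (JPseries_holo JPg (mwv_ibw a l)) wpart_mwv mwv_iv.
rewrite (JPseries_mswap_mwv JPg _ neq_a) conjC0 addr0 => /eqP.
rewrite !mulf_eq0 invr_eq0 expf_eq0 (negbTE two_neq0) (negbTE twoi_neq0) andbF !orbF.
by move/eqP.
Qed.

Lemma N0_JP_coef_v t : A 0%MM t * twoi ^+ t + (A 0%MM t * twoi ^+ t)^* = 0.
Proof.
have mv_bw j : mv t (ibw j) = 0%N by rewrite mvE eq_jet_idx.
have := N0_holo_eq0 N0f mv_bw.
rewrite f_re /re_series /conj_series mswap_mv (JPseries_holo JPg mv_bw).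
rewrite wpart_mv mvE eqxx mul1n => /eqP.
by rewrite mulf_eq0 invr_eq0 (negbTE two_neq0) orbF => /eqP.
Qed.

(* Re(A^{t+1}_0 (2i)^{t+1}) = 0 makes the coefficient of f on w_j \bar w_j v^t real and
   independent of j, so Delta' A_{1,1} = 0 at v^t forces it to vanish. *)
Lemma N0_JP_coef_vS t : A 0%MM t.+1 = 0.
Proof.
pose z := A 0%MM t.+1 * twoi ^+ t.+1.
have conj_z : z^* = - z by apply/eqP; rewrite -addr_eq0 addrC N0_JP_coef_v.
have G_z : A 0%MM t.+1 * (t.+1%:R * twoi ^+ t) = t.+1%:R * z / twoi.
  by rewrite /z exprS; field; exact: twoi_neq0.
have f_pair j : f (mpair j t) = t.+1%:R * z / twoi.
  rewrite f_re /re_series /conj_series mswap_mpair (JPseries_pair JPg) G_z.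
  rewrite rmorphM /= fmorphV /= rmorphM /= conjC_nat conj_z conj_twoi.
  by field; exact: twoi_neq0.
have := N0f.2.2 (mv t); rewrite Laplw_Apq11_mv (eq_bigr _ (fun j _ => f_pair j)).
rewrite sumr_const card_ord -[_ *+ k]mulr_natr => /eqP.
rewrite !mulf_eq0 invr_eq0 (negbTE natr_k_neq0) (negbTE twoi_neq0) pnatr_eq0 /= !orbF.
by rewrite expf_eq0 (negbTE twoi_neq0) andbF orbF => /eqP.
Qed.

Lemma N0_JP_coef_eq0 x : x != (0%MM, 0%N) -> A x.1 x.2 = 0.
Proof.
case: x => a l /=; case: (eqVneq a 0%MM) => [->|/N0_JP_coef_holo //].
by case: l => [|t]; [rewrite eqxx | move=> _; exact: N0_JP_coef_vS].
Qed.

Lemma N0_JP_eq0 m : f m = 0.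
Proof.
rewrite f_re /re_series /conj_series !(JPseries_const JPg _ N0_JP_coef_eq0).
have [->|neq_m] := eqVneq m 0%MM.
  rewrite mswap0 eqxx mulr1.
  by have := N0_JP_coef_v 0; rewrite expr0 mulr1 => ->; rewrite mul0r.
have -> : (mswap m == 0%MM) = false by rewrite -mswap0 (can_eq mswapK) (negbTE neq_m).
by rewrite !mulr0 conjC0 addr0 mul0r.
Qed.

End Uniqueness.

(** * Every real jet splits as an element of N_0 plus a pluriharmonic jet *)

Section Existence.
Variable f : series R k.
Hypothesis JEf : JE f.

Lemma conj_f_mswap m : (f (mswap m))^* = f m.
Proof. exact: JEf. Qed.

Lemma conj_f m : mswap m = m -> (f m)^* = f m.
Proof. by move=> mswap_m; rewrite -{1}mswap_m conj_f_mswap. Qed.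

Definition pair_trace t : C := \sum_(j < k) f (mpair j t).

Lemma conj_pair_trace t : (pair_trace t)^* = pair_trace t.
Proof. by rewrite rmorph_sum /=; apply: eq_bigr => j _; rewrite conj_f ?mswap_mpair. Qed.

(* The prescribed value of A^l_a (2i)^l.  For l = 0 the correction term is x / 0 = 0;
   for l = t+1 it is what makes Re g equal to pair_trace t / k on each w_j \bar w_j v^t. *)
Definition JPvalue a l : C :=
  if a == 0%MM then f (mv l) + twoi * pair_trace l.-1 / (k%:R * l%:R)
  else 2%:R * f (mwv a l).

Definition JPcoef a l : C := JPvalue a l / twoi ^+ l.

Local Notation h := (re_series (JPsum JPcoef)).

Lemma JPcoefK a l : JPcoef a l * twoi ^+ l = JPvalue a l.
Proof. by rewrite divfK // expf_neq0 // twoi_neq0. Qed.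

Lemma re_JPsum_mv t : h (mv t) = f (mv t).
Proof.
have mv_bw j : mv t (ibw j) = 0%N by rewrite mvE eq_jet_idx.
rewrite /re_series /conj_series mswap_mv (JPseries_holo (formal_sum_JPsum _) mv_bw).
rewrite wpart_mv mvE eqxx mul1n JPcoefK /JPvalue eqxx.
rewrite -mulrA rmorphD /= rmorphM /= conj_twoi rmorphM /= fmorphV /= rmorphM /=.
rewrite !conjC_nat conj_pair_trace conj_f ?mswap_mv // mulNr.
by move: (twoi * _) => y; field.
Qed.

Lemma re_JPsum_mwv a l : a != 0%MM -> h (mwv a l) = f (mwv a l).
Proof.
move=> neq_a; rewrite /re_series /conj_series.
rewrite (JPseries_holo (formal_sum_JPsum _) (mwv_ibw a l)) wpart_mwv mwv_iv JPcoefK.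
rewrite (JPseries_mswap_mwv (formal_sum_JPsum _) _ neq_a).
by rewrite /JPvalue (negbTE neq_a) conjC0 addr0; field.
Qed.

Lemma re_JPsum_holo (m : 'X_{1..N}) : (forall j, m (ibw j) = 0%N) -> h m = f m.
Proof.
move=> m_bw; rewrite (mnm_wvE m_bw); case: (eqVneq (wpart m) 0%MM) => [->|].
  by rewrite /mwv mw0 add0m re_JPsum_mv.
exact: re_JPsum_mwv.
Qed.

Lemma re_JPsum_pair j t : h (mpair j t) = pair_trace t / k%:R.
Proof.
have g_pair : JPsum JPcoef (mpair j t) = t.+1%:R * f (mv t.+1) / twoi + pair_trace t / k%:R.
  rewrite (JPseries_pair (formal_sum_JPsum _)) /JPcoef /JPvalue eqxx /= exprS.
  by field; rewrite natr_k_neq0 twoi_neq0 expf_neq0 ?twoi_neq0 // addrC natr1 pnatr_eq0.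
rewrite /re_series /conj_series mswap_mpair g_pair.
rewrite rmorphD /= !rmorphM /= !fmorphV /= !conjC_nat conj_twoi conj_pair_trace.
by rewrite conj_f ?mswap_mv //; field; rewrite twoi_neq0 natr_k_neq0.
Qed.

Lemma JE_decomp : exists g h : series R k, [/\ N0 g, JP h & forall m, f m = g m + h m].
Proof.
have JP_h : JP h by exists JPcoef, (JPsum JPcoef); split; [exact: formal_sum_JPsum |].
exists (fun m => f m - h m), h; split=> [| // | m]; last by rewrite subrK.
have JE_fh : JE (fun m => f m - h m).
  by move=> m; rewrite /conj_series rmorphB /= conj_f_mswap conj_re_series_mswap.
split; [exact: JE_fh | split].
- move=> p q pq0 m; rewrite /Apq; case: ifP => // /andP[/eqP degw_m /eqP degbw_m].
  have [/degw_eq0 m_w | /degbw_eq0 m_bw] : (degw m = 0 \/ degbw m = 0)%N.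
    by move: pq0; rewrite -degw_m -degbw_m; lia.
  + have mswap_bw j : mswap m (ibw j) = 0%N by rewrite mswapE swap_idx_ibw m_w.
    by rewrite -JE_fh /conj_series re_JPsum_holo // subrr conjC0.
  + by rewrite re_JPsum_holo // subrr.
- move=> m; case: (posnP (degw m)) => [/degw_eq0 m_w | degw_m]; last first.
    by rewrite Laplw_Apq11_eq0 // degw_m.
  case: (posnP (degbw m)) => [/degbw_eq0 m_bw | degbw_m]; last first.
    by rewrite Laplw_Apq11_eq0 // degbw_m orbT.
  rewrite (mnm_vE m_w m_bw) Laplw_Apq11_mv sumrB.
  rewrite (eq_bigr _ (fun j _ => re_JPsum_pair j _)) sumr_const card_ord -/(pair_trace _).
  by rewrite -[_ *+ k]mulr_natr divfK ?subrr // natr_k_neq0.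
Qed.

End Existence.

End PositiveDimension.

End JetDecomposition.

Theorem mainTheorem9 (R : realType) (n : nat) (hn : (2 <= n)%N) :
  (forall f : series R n.-1, JE f ->
     exists g h : series R n.-1, [/\ N0 g, JP h & forall m, f m = g m + h m]) /\
  (forall f : series R n.-1, N0 f -> JP f -> forall m, f m = 0).
Proof.
have k_gt0 : (0 < n.-1)%N by case: n hn => [|[|n]].
split=> f; first exact: JE_decomp.
by move=> N0f [A [g [JPg f_re]]]; exact: (N0_JP_eq0 k_gt0 N0f JPg f_re).
Qed.
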